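(* Let $-D/2\le x_C<x_B\le D/2$. For $m\in\{B,C\}$ let $r_2^m(r_1)$ denote the boundary function of $\mathcal{C}_f(x_m)$, i.e. $r_2^m(r_1)=\max\{r_2:(r_1,r_2)\in\mathcal{C}_f(x_m)\}$ for $0\le r_1\le r_{1,\max}^m$, where $r_{k,\max}^m=\log_2(1+\bar P h_k(x_m))$. Then the curves $r_2^B(r_1)$ and $r_2^C(r_1)$ have exactly one intersection point $(\bar r_1^{BC},\bar r_2^{BC})$, and it satisfies $0<\bar r_1^{BC}<r_{1,\max}^B$ and $0<\bar r_2^{BC}<r_{2,\max}^C$. Furthermore, $r_2^B(r_1)>r_2^C(r_1)$ for $0\le r_1<\bar r_1^{BC}$, and $r_2^B(r_1)<r_2^C(r_1)$ for $\bar r_1^{BC}<r_1\le r_{1,\max}^B$.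
   Context: Fix $D>0$, $H>0$, $\beta_0>0$, $\bar P>0$. Ground users GU 1, GU 2 are at horizontal positions $x_1=-D/2$, $x_2=D/2$; for a UAV at horizontal position $x$ (altitude $H$), $h_k(x)=\beta_0/((x-x_k)^2+H^2)$. For $p_1,p_2\ge0$, $\mathcal{C}_{\rm MAC}(x,p_1,p_2)$ is the set of $(r_1,r_2)$, $r_1,r_2\ge0$, with $r_1\le\log_2(1+p_1h_1(x))$, $r_2\le\log_2(1+p_2h_2(x))$, $r_1+r_2\le\log_2(1+p_1h_1(x)+p_2h_2(x))$; the fixed-location capacity region is $\mathcal{C}_f(x)=\bigcup_{p_1,p_2\ge0,\,p_1+p_2\le\bar P}\mathcal{C}_{\rm MAC}(x,p_1,p_2)$. *)

From HB Require Import structures.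
From mathcomp Require Import all_boot all_order all_algebra.
From mathcomp Require Import all_classical all_reals all_analysis.
Set Implicit Arguments. Unset Strict Implicit. Unset Printing Implicit Defensive.
Import Order.TTheory GRing.Theory Num.Theory.
Local Open Scope classical_set_scope.
Local Open Scope ring_scope.

Section UAV.
Variable R : realType.

Definition log2 (x : R) : R := ln x / ln 2.

(* channel gains: GU 1 at -D/2, GU 2 at D/2, UAV at horizontal x, altitude H *)
Definition h1 (D H beta0 x : R) : R := beta0 / ((x - (- D / 2)) ^+ 2 + H ^+ 2).
Definition h2 (D H beta0 x : R) : R := beta0 / ((x - D / 2) ^+ 2 + H ^+ 2).

Definition C_MAC (D H beta0 x p1 p2 : R) : set (R * R) :=
  [set r | [/\ 0 <= r.1, 0 <= r.2,
             r.1 <= log2 (1 + p1 * h1 D H beta0 x),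
             r.2 <= log2 (1 + p2 * h2 D H beta0 x) &
             r.1 + r.2 <= log2 (1 + p1 * h1 D H beta0 x + p2 * h2 D H beta0 x)]].

Definition C_f (D H beta0 Pbar x : R) : set (R * R) :=
  [set r | exists p1 p2 : R, [/\ 0 <= p1, 0 <= p2, p1 + p2 <= Pbar &
                                 C_MAC D H beta0 x p1 p2 r]].

Definition r1max (D H beta0 Pbar x : R) : R := log2 (1 + Pbar * h1 D H beta0 x).
Definition r2max (D H beta0 Pbar x : R) : R := log2 (1 + Pbar * h2 D H beta0 x).

(* boundary function r_2(r_1) = max {r2 | (r1, r2) in C_f(x)} (taken as sup;
   the max is attained for 0 <= r1 <= r1max) *)
Definition bnd (D H beta0 Pbar x r1 : R) : R :=
  sup [set r2 | C_f D H beta0 Pbar x (r1, r2)].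

End UAV.

(* At a fixed UAV position with channel gains a, b, a rate pair (r1, r2) lies in
   C_f iff the SNR pair u = 2^r1 - 1, w = 2^r2 - 1 satisfies
   u/a + w/b + u w / max(a, b) <= Pbar: successive decoding of the weaker user
   first needs exactly this power, and the MAC constraints show that no power
   allocation does better.  The bound is affine in w, so the boundary is
   r2 = log2 (1 + (Pbar - u/a) / (1/b + u / max(a, b))).
   Moving the UAV from x_C to x_B lowers h1 and raises h2, and the difference of
   the two boundary SNRs has the sign of a quadratic in u that is positive at
   u = 0 and negative at u = Pbar h1(x_B), where the B-boundary reaches zero.
   Such a quadratic changes sign exactly once on [0, Pbar h1(x_B)]: after
   factoring out the root, the cofactor is affine and negative at both ends. *)

From HB Require Import structures.
From mathcomp Require Import all_boot all_order all_algebra.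
From mathcomp Require Import all_classical all_reals all_analysis.
From mathcomp Require Import ring lra.
Set Implicit Arguments. Unset Strict Implicit. Unset Printing Implicit Defensive.
Import Order.TTheory GRing.Theory Num.Theory numFieldNormedType.Exports.
Local Open Scope classical_set_scope.
Local Open Scope ring_scope.

Section Log2.
Variable R : realType.
Implicit Types (x y g r s : R).

Lemma ln2_gt0 : 0 < ln (2 : R).
Proof. by rewrite ln_gt0 // ltr1n. Qed.

Lemma ltr_log2 : {in Num.pos &, {mono @log2 R : x y / x < y}}.
Proof. by move=> x y x0 y0; rewrite /log2 ltr_pM2r ?invr_gt0 ?ln2_gt0 ?ltr_ln. Qed.

Lemma ler_log2 : {in Num.pos &, {mono @log2 R : x y / x <= y}}.
Proof. by move=> x y x0 y0; rewrite /log2 ler_pM2r ?invr_gt0 ?ln2_gt0 ?ler_ln. Qed.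

Lemma log2_powR r : log2 (2 `^ r) = r.
Proof. by rewrite /log2 ln_powR mulfK // gt_eqF // ln2_gt0. Qed.

Lemma powR_log2 y : 0 < y -> 2 `^ log2 y = y.
Proof.
move=> y0; rewrite /powR pnatr_eq0 /= /log2 divfK ?lnK //.
by rewrite gt_eqF // ln2_gt0.
Qed.

Definition snr r : R := 2 `^ r - 1.

Lemma snrK r : log2 (1 + snr r) = r.
Proof. by rewrite /snr addrC subrK log2_powR. Qed.

Lemma snr_log2 g : -1 < g -> snr (log2 (1 + g)) = g.
Proof. by move=> g1; rewrite /snr powR_log2 1?addrC ?addKr //; lra. Qed.

Lemma snr_gtN1 r : -1 < snr r.
Proof.
have : 0 < (2 : R) `^ r by rewrite powR_gt0.
by rewrite /snr; lra.
Qed.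

Lemma snr0 : snr 0 = 0.
Proof. by rewrite /snr powRr0 subrr. Qed.

Lemma snrD r s : 1 + snr (r + s) = (1 + snr r) * (1 + snr s).
Proof. by rewrite /snr !(addrC 1) !subrK powRD // pnatr_eq0 implybT. Qed.

Lemma ltr_log1p x y : -1 < x -> -1 < y -> (log2 (1 + x) < log2 (1 + y)) = (x < y).
Proof. by move=> x1 y1; rewrite ltr_log2 ?posrE ?ltrD2l //; lra. Qed.

Lemma ler_log1p x y : -1 < x -> -1 < y -> (log2 (1 + x) <= log2 (1 + y)) = (x <= y).
Proof. by move=> x1 y1; rewrite ler_log2 ?posrE ?lerD2l //; lra. Qed.

Lemma ltr_snr : {mono snr : r s / r < s}.
Proof.
by move=> r s; rewrite -[in RHS](snrK r) -[in RHS](snrK s) ltr_log1p ?snr_gtN1.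
Qed.

Lemma ler_snr : {mono snr : r s / r <= s}.
Proof. by move=> r s; rewrite !leNgt ltr_snr. Qed.

Lemma snr_ge0 r : 0 <= r -> 0 <= snr r.
Proof. by move=> r0; rewrite -snr0 ler_snr. Qed.

Lemma rate_leE r g : -1 < g -> (r <= log2 (1 + g)) = (snr r <= g).
Proof. by move=> g1; rewrite -{1}(snrK r) ler_log1p ?snr_gtN1. Qed.

End Log2.

Section MinPower.
Variable R : realType.
Implicit Types (a b u w P : R).

Definition min_power a b u w : R := u / a + w / b + u * w / Num.max a b.

Lemma min_powerC a b u w : min_power a b u w = min_power b a w u.
Proof. by rewrite /min_power maxC (mulrC u w) (addrC (u / a)). Qed.

Lemma min_power_le a b p1 p2 u w : 0 < a -> 0 < b ->
  u <= p1 * a -> w <= p2 * b -> (1 + u) * (1 + w) <= 1 + p1 * a + p2 * b ->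
  min_power a b u w <= p1 + p2.
Proof.
wlog le_ba : a b p1 p2 u w / b <= a => [gen|a0 b0 _ le_w le_uw].
  move=> a0 b0 le_u le_w le_uw; have [/gen|/ltW le_ab] := leP b a; first exact.
  rewrite min_powerC addrC; apply: gen => //.
  by rewrite mulrC addrAC.
have key : a * b * (p1 + p2 - min_power a b u w) =
    b * (1 + p1 * a + p2 * b - (1 + u) * (1 + w)) + (a - b) * (p2 * b - w).
  by rewrite /min_power max_l //; field; rewrite !gt_eqF.
rewrite -subr_ge0 -(pmulr_rge0 _ (mulr_gt0 a0 b0)) key.
by apply: addr_ge0; apply: mulr_ge0; lra.
Qed.

Lemma min_power_achievable a b u w : 0 < a -> 0 < b -> 0 <= u -> 0 <= w ->
  exists p1 p2, [/\ p1 + p2 = min_power a b u w, u <= p1 * a, w <= p2 * b &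
                    (1 + u) * (1 + w) = 1 + p1 * a + p2 * b].
Proof.
wlog le_ba : a b u w / b <= a => [gen|a0 b0 u0 w0].
  move=> a0 b0 u0 w0; have [/gen|/ltW le_ab] := leP b a; first exact.
  have [p2 [p1 [sum_p le_w le_u prod_p]]] := gen b a w u le_ab b0 a0 w0 u0.
  exists p1, p2; split => //; first by rewrite addrC sum_p min_powerC.
  by rewrite mulrC prod_p addrAC.
(* Decode user 2 first, treating user 1 as noise; user 1 then sees no interference. *)
exists ((1 + w) * u / a), (w / b); rewrite !divfK ?gt_eqF //; split => //.
- by rewrite /min_power max_l //; field; rewrite !gt_eqF.
- by rewrite ler_peMl //; lra.
- by ring.
Qed.

Definition max_snr2 P a b u : R := (P - u / a) / (b^-1 + u / Num.max a b).

Definition max_rate2 P a b r1 : R := log2 (1 + max_snr2 P a b (snr r1)).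

Lemma max_snr2_den_gt0 a b u : 0 < a -> 0 < b -> 0 <= u ->
  0 < b^-1 + u / Num.max a b.
Proof.
move=> a0 b0 u0; rewrite ltr_pwDl ?invr_gt0 // divr_ge0 //.
by rewrite le_max ltW.
Qed.

Lemma min_power_leE P a b u w : 0 < a -> 0 < b -> 0 <= u ->
  (min_power a b u w <= P) = (w <= max_snr2 P a b u).
Proof.
move=> a0 b0 u0; rewrite /max_snr2 ler_pdivlMr ?max_snr2_den_gt0 //.
have -> : min_power a b u w = u / a + w * (b^-1 + u / Num.max a b).
  by rewrite /min_power; field; rewrite !gt_eqF // lt_max a0.
by rewrite -lerBrDl.
Qed.

Lemma max_snr2_ge0 P a b u : 0 < a -> 0 < b -> 0 <= u -> u <= P * a ->
  0 <= max_snr2 P a b u.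
Proof.
move=> a0 b0 u0 uP; apply: divr_ge0; last exact/ltW/max_snr2_den_gt0.
by rewrite subr_ge0 ler_pdivrMr.
Qed.

Lemma max_snr2_gt0 P a b u : 0 < a -> 0 < b -> 0 <= u -> u < P * a ->
  0 < max_snr2 P a b u.
Proof.
move=> a0 b0 u0 uP; rewrite divr_gt0 ?max_snr2_den_gt0 //.
by rewrite subr_gt0 ltr_pdivrMr.
Qed.

Lemma max_snr2_lt P a b u : 0 <= P -> 0 < a -> 0 < b -> 0 < u ->
  max_snr2 P a b u < P * b.
Proof.
move=> P0 a0 b0 u0; have m0 : 0 < Num.max a b by rewrite lt_max a0.
rewrite /max_snr2 ltr_pdivrMr ?max_snr2_den_gt0 ?ltW //.
rewrite mulrDr mulfK ?gt_eqF //.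
have : 0 < u / a by rewrite divr_gt0.
have : 0 <= P * b * (u / Num.max a b).
  exact: mulr_ge0 (mulr_ge0 P0 (ltW b0)) (divr_ge0 (ltW u0) (ltW m0)).
lra.
Qed.

End MinPower.

Section CapacityRegion.
Variables (R : realType) (D H beta0 P x : R).
Local Notation a := (h1 D H beta0 x).
Local Notation b := (h2 D H beta0 x).
Hypotheses (a_gt0 : 0 < a) (b_gt0 : 0 < b).

Lemma C_fE r1 r2 : C_f D H beta0 P x (r1, r2) <->
  [/\ 0 <= r1, 0 <= r2 & min_power a b (snr r1) (snr r2) <= P].
Proof.
split.
  case=> p1 [p2 [p1_ge0 p2_ge0 sum_p [/= r1_ge0 r2_ge0 le_r1 le_r2 le_r12]]].
  have pa_ge0 := mulr_ge0 p1_ge0 (ltW a_gt0).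
  have pb_ge0 := mulr_ge0 p2_ge0 (ltW b_gt0).
  split => //; apply: le_trans sum_p.
  apply: min_power_le => //; rewrite -?rate_leE //; try lra.
  by rewrite -snrD -addrA lerD2l -rate_leE ?addrA //; lra.
case=> r1_ge0 r2_ge0 le_P.
have [p1 [p2 [sum_p le_u le_w prod_p]]] :=
  min_power_achievable a_gt0 b_gt0 (snr_ge0 r1_ge0) (snr_ge0 r2_ge0).
have pa_ge0 : 0 <= p1 * a := le_trans (snr_ge0 r1_ge0) le_u.
have pb_ge0 : 0 <= p2 * b := le_trans (snr_ge0 r2_ge0) le_w.
exists p1, p2; split; first by rewrite -(pmulr_lge0 _ a_gt0).
- by rewrite -(pmulr_lge0 _ b_gt0).
- by rewrite sum_p.
split; rewrite //= ?rate_leE //; try lra.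
rewrite -addrA rate_leE; last lra.
by rewrite -(lerD2l 1) snrD prod_p addrA.
Qed.

Lemma bndE r1 : 0 <= P -> 0 <= r1 <= r1max D H beta0 P x ->
  bnd D H beta0 P x r1 = max_rate2 P a b r1.
Proof.
move=> P_ge0 /andP[r1_ge0 le_r1].
have Pa_ge0 : 0 <= P * a by rewrite mulr_ge0 // ltW.
have u_le : snr r1 <= P * a by rewrite -rate_leE //; lra.
have V_ge0 := max_snr2_ge0 a_gt0 b_gt0 (snr_ge0 r1_ge0) u_le.
rewrite /bnd /max_rate2.
suff -> : [set r2 | C_f D H beta0 P x (r1, r2)] =
          [set` `[0, log2 (1 + max_snr2 P a b (snr r1))]].
  by rewrite sup_itvcc // rate_leE ?snr0 //; lra.
apply/seteqP; split => r2 /=; rewrite in_itv /=.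
  case/C_fE => _ r2_ge0; rewrite min_power_leE ?snr_ge0 //.
  by rewrite r2_ge0 rate_leE //; lra.
case/andP => r2_ge0 le_r2; apply/C_fE; split => //.
by rewrite min_power_leE ?snr_ge0 // -rate_leE //; lra.
Qed.

End CapacityRegion.

Section Gains.
Variables (R : realType) (D H beta0 : R).
Hypotheses (H_gt0 : 0 < H) (beta0_gt0 : 0 < beta0).

Lemma sq_dist_gt0 x c : 0 < (x - c) ^+ 2 + H ^+ 2.
Proof. by rewrite ltr_wpDl ?sqr_ge0 ?exprn_gt0. Qed.

Lemma h1_gt0 x : 0 < h1 D H beta0 x.
Proof. by rewrite divr_gt0 ?sq_dist_gt0. Qed.

Lemma h2_gt0 x : 0 < h2 D H beta0 x.
Proof. by rewrite divr_gt0 ?sq_dist_gt0. Qed.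

Lemma h1_decreasing x y : - D / 2 <= x -> x < y -> h1 D H beta0 y < h1 D H beta0 x.
Proof.
move=> leDx lt_xy; rewrite ltr_pM2l // ltf_pV2 ?posrE ?sq_dist_gt0 // ltrD2r.
by rewrite ltrXn2r // ?subr_ge0 ?ltrD2r // opprK.
Qed.

Lemma h2_increasing x y : x < y -> y <= D / 2 -> h2 D H beta0 x < h2 D H beta0 y.
Proof.
move=> lt_xy le_yD; rewrite ltr_pM2l // ltf_pV2 ?posrE ?sq_dist_gt0 // ltrD2r.
by rewrite -sqrrN -[X in _ < X]sqrrN !opprB ltrXn2r // ?subr_ge0 ?ltrD2l // ltrN2.
Qed.

Lemma r1max_decreasing P x y : 0 <= P -> - D / 2 <= x -> x < y ->
  r1max D H beta0 P y <= r1max D H beta0 P x.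
Proof.
move=> P_ge0 le_x lt_xy; have := h1_gt0 x; have := h1_gt0 y => hy hx.
rewrite /r1max ler_log1p; try nra.
by apply: ler_wpM2l => //; apply: ltW; exact: h1_decreasing.
Qed.

End Gains.

Section QuadraticSign.
Variable R : realType.

Lemma quadratic_sign_change (Q : R -> R) (k l m T : R) :
  (forall u, Q u = k * u ^+ 2 + l * u + m) -> 0 <= T -> 0 < Q 0 -> Q T < 0 ->
  exists2 s, 0 < s < T &
    [/\ Q s = 0, forall u, 0 <= u < s -> 0 < Q u & forall u, s < u <= T -> Q u < 0].
Proof.
move=> QE T_ge0 Q0_gt0 QT_lt0.
have [s] : exists2 s, s \in `[0, T] & Q s = 0.
  apply: IVT => //; last by rewrite ge_min le_max (ltW QT_lt0) (ltW Q0_gt0) ?orbT.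
  have -> : Q = horner (k *: 'X^2 + l *: 'X + m%:P).
    by apply/funext => u; rewrite QE !hornerE.
  exact/continuous_subspaceT/continuous_horner.
rewrite in_itv /= => /andP[s_ge0 s_leT] Qs.
have s_gt0 : 0 < s.
  rewrite lt_neqAle s_ge0 andbT; apply: contraTneq Q0_gt0 => s0.
  by rewrite -s0 in Qs; rewrite Qs ltxx.
have s_ltT : s < T.
  rewrite lt_neqAle s_leT andbT; apply: contraTneq QT_lt0 => sT.
  by rewrite sT in Qs; rewrite Qs ltxx.
have factor u : Q u = (u - s) * (k * (u + s) + l).
  by rewrite -[RHS]addr0 -Qs !QE; ring.
(* The cofactor is affine in [u] and negative at [0] and at [T]. *)
have cof0 : k * (0 + s) + l < 0.
  by move: Q0_gt0; rewrite factor sub0r mulNr oppr_gt0 pmulr_rlt0.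
have cofT : k * (T + s) + l < 0 by move: QT_lt0; rewrite factor pmulr_rlt0 ?subr_gt0.
have cof_lt0 u : 0 <= u <= T -> k * (u + s) + l < 0.
  case/andP=> u_ge0 u_leT; have [k_ge0|k_lt0] := leP 0 k.
    by have := ler_wpM2l k_ge0 u_leT; lra.
  by have := ler_wnM2l (ltW k_lt0) u_ge0; lra.
exists s; first by rewrite s_gt0.
split => // u /andP[u_lb u_ub]; rewrite factor.
  by rewrite nmulr_rgt0 ?subr_lt0 // cof_lt0 // u_lb ltW // (lt_trans u_ub).
by rewrite pmulr_rlt0 ?subr_gt0 // cof_lt0 // u_ub andbT ltW // (le_lt_trans s_ge0).
Qed.

End QuadraticSign.

Section Crossing.
Variables (R : realType) (P a b c d : R).
Hypotheses (P_gt0 : 0 < P) (a_gt0 : 0 < a) (b_gt0 : 0 < b) (d_gt0 : 0 < d).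
Hypotheses (lt_ac : a < c) (lt_db : d < b).

Let c_gt0 : 0 < c := lt_trans a_gt0 lt_ac.

(* The numerator of [max_snr2 P a b u - max_snr2 P c d u]. *)
Let Q u := (P - u / a) * (d^-1 + u / Num.max c d) -
           (P - u / c) * (b^-1 + u / Num.max a b).

Lemma max_snr2_subE u : 0 <= u -> max_snr2 P a b u - max_snr2 P c d u =
  Q u / ((b^-1 + u / Num.max a b) * (d^-1 + u / Num.max c d)).
Proof.
move=> u_ge0; have := max_snr2_den_gt0 a_gt0 b_gt0 u_ge0.
have := max_snr2_den_gt0 c_gt0 d_gt0 u_ge0.
rewrite /max_snr2 /Q; set dB := _ + _; set dC := _ + _ => dC_gt0 dB_gt0.
by field; rewrite !gt_eqF.
Qed.

Lemma Q_quadratic : exists k l m, forall u, Q u = k * u ^+ 2 + l * u + m.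
Proof.
exists ((c * Num.max a b)^-1 - (a * Num.max c d)^-1).
exists (P / Num.max c d - (a * d)^-1 - P / Num.max a b + (c * b)^-1).
exists (P / d - P / b).
move=> u; rewrite /Q; field.
by rewrite !gt_eqF ?lt_max ?a_gt0 ?c_gt0.
Qed.

Lemma ltr_max_snr2 u : 0 <= u -> (max_snr2 P a b u < max_snr2 P c d u) = (Q u < 0).
Proof.
move=> u_ge0; rewrite -subr_lt0 max_snr2_subE // pmulr_llt0 // invr_gt0.
by rewrite mulr_gt0 ?max_snr2_den_gt0.
Qed.

Lemma gtr_max_snr2 u : 0 <= u -> (max_snr2 P c d u < max_snr2 P a b u) = (0 < Q u).
Proof.
move=> u_ge0; rewrite -subr_gt0 max_snr2_subE // pmulr_lgt0 // invr_gt0.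
by rewrite mulr_gt0 ?max_snr2_den_gt0.
Qed.

Lemma max_rate2_crossing : exists r1b, [/\ 0 < r1b < log2 (1 + P * a),
  0 < max_rate2 P a b r1b < log2 (1 + P * d),
  max_rate2 P a b r1b = max_rate2 P c d r1b,
  (forall r1, 0 <= r1 < r1b -> max_rate2 P c d r1 < max_rate2 P a b r1) &
  (forall r1, r1b < r1 <= log2 (1 + P * a) ->
     max_rate2 P a b r1 < max_rate2 P c d r1)].
Proof.
have Pa_gt0 : 0 < P * a := mulr_gt0 P_gt0 a_gt0.
have [k [l [m QE]]] := Q_quadratic.
have Q0_gt0 : 0 < Q 0.
  by rewrite /Q !(mul0r, subr0, addr0) subr_gt0 ltr_pM2l // ltf_pV2 ?posrE.
have QPa_lt0 : Q (P * a) < 0.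
  rewrite /Q mulfK ?gt_eqF // subrr mul0r sub0r oppr_lt0.
  by rewrite mulr_gt0 ?max_snr2_den_gt0 ?ltW // subr_gt0 ltr_pdivrMr // ltr_pM2l.
have [s /andP[s_gt0 s_lt] [Qs Q_pos Q_neg]] :=
  quadratic_sign_change QE (ltW Pa_gt0) Q0_gt0 QPa_lt0.
have snr_range r1 : 0 <= r1 <= log2 (1 + P * a) -> 0 <= snr r1 <= P * a.
  by case/andP=> r1_ge0 le_r1; rewrite snr_ge0 // -rate_leE //; lra.
have rate_cmp r1 : 0 <= r1 <= log2 (1 + P * a) ->
    ((max_rate2 P a b r1 < max_rate2 P c d r1) = (Q (snr r1) < 0)) *
    ((max_rate2 P c d r1 < max_rate2 P a b r1) = (0 < Q (snr r1))).
  move=> /snr_range /andP[u_ge0 le_u].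
  have le_u' : snr r1 <= P * c by rewrite (le_trans le_u) // ler_pM2l // ltW.
  have := max_snr2_ge0 a_gt0 b_gt0 u_ge0 le_u.
  have := max_snr2_ge0 c_gt0 d_gt0 u_ge0 le_u'.
  by split; rewrite /max_rate2 ltr_log1p ?ltr_max_snr2 ?gtr_max_snr2 //; lra.
pose r1b := log2 (1 + s).
have snr_r1b : snr r1b = s by rewrite snr_log2 //; lra.
have r1b_gt0 : 0 < r1b by rewrite -ltr_snr snr0 snr_r1b.
have r1b_lt : r1b < log2 (1 + P * a) by rewrite ltr_log1p //; lra.
have eq_r1b : max_rate2 P a b r1b = max_rate2 P c d r1b.
  rewrite /max_rate2 snr_r1b; congr (log2 (1 + _)); apply/eqP.
  by rewrite -subr_eq0 max_snr2_subE ?Qs ?mul0r // ltW.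
exists r1b; split => //; first by rewrite r1b_gt0.
- have VB_gt0 := max_snr2_gt0 a_gt0 b_gt0 (ltW s_gt0) s_lt.
  have VC_lt := max_snr2_lt (ltW P_gt0) c_gt0 d_gt0 s_gt0.
  have VC_ge0 : 0 <= max_snr2 P c d s.
    by rewrite max_snr2_ge0 ?(ltW s_gt0) // (le_trans (ltW s_lt)) // ler_pM2l // ltW.
  apply/andP; split; first by rewrite -ltr_snr snr0 /max_rate2 snr_r1b snr_log2 //; lra.
  by rewrite eq_r1b /max_rate2 snr_r1b ltr_log1p //; lra.
- move=> r1 /andP[r1_ge0 lt_r1].
  have r1I : 0 <= r1 <= log2 (1 + P * a) by rewrite r1_ge0 ltW // (lt_trans lt_r1).
  by rewrite (rate_cmp _ r1I).2 Q_pos // snr_ge0 //= -snr_r1b ltr_snr.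
- move=> r1 /andP[lt_r1 le_r1].
  have r1I : 0 <= r1 <= log2 (1 + P * a) by rewrite le_r1 andbT ltW // (lt_trans r1b_gt0).
  have /andP[_ le_u] := snr_range _ r1I.
  by rewrite (rate_cmp _ r1I).1 Q_neg // -snr_r1b ltr_snr lt_r1.
Qed.

End Crossing.

Theorem lemma6 (R : realType) (D H beta0 Pbar xC xB : R) :
  0 < D -> 0 < H -> 0 < beta0 -> 0 < Pbar ->
  - D / 2 <= xC -> xC < xB -> xB <= D / 2 ->
  exists r1b : R,
    [/\ 0 < r1b < r1max D H beta0 Pbar xB,
        0 < bnd D H beta0 Pbar xB r1b < r2max D H beta0 Pbar xC,
        bnd D H beta0 Pbar xB r1b = bnd D H beta0 Pbar xC r1b &
        [/\ (forall r1, 0 <= r1 <= r1max D H beta0 Pbar xB ->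
           bnd D H beta0 Pbar xB r1 = bnd D H beta0 Pbar xC r1 -> r1 = r1b),
        (forall r1, 0 <= r1 < r1b ->
           bnd D H beta0 Pbar xB r1 > bnd D H beta0 Pbar xC r1) &
        (forall r1, r1b < r1 <= r1max D H beta0 Pbar xB ->
           bnd D H beta0 Pbar xB r1 < bnd D H beta0 Pbar xC r1)]].
Proof.
move=> _ H_gt0 beta0_gt0 P_gt0 le_xC lt_xCB le_xB.
have gains_gt0 x : 0 < h1 D H beta0 x /\ 0 < h2 D H beta0 x.
  by rewrite h1_gt0 ?h2_gt0.
have [[aB_gt0 bB_gt0] [aC_gt0 bC_gt0]] := (gains_gt0 xB, gains_gt0 xC).
have lt_a := h1_decreasing H_gt0 beta0_gt0 le_xC lt_xCB.
have lt_d := h2_increasing H_gt0 beta0_gt0 lt_xCB le_xB.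
have [r1b [/andP[r1b_gt0 r1b_lt] rate_r1b eq_r1b before after]] :=
  max_rate2_crossing P_gt0 aB_gt0 bB_gt0 bC_gt0 lt_a lt_d.
have bndB r1 : 0 <= r1 <= r1max D H beta0 Pbar xB ->
    bnd D H beta0 Pbar xB r1 = max_rate2 Pbar (h1 D H beta0 xB) (h2 D H beta0 xB) r1.
  exact: bndE (ltW P_gt0).
have bndC r1 : 0 <= r1 <= r1max D H beta0 Pbar xB ->
    bnd D H beta0 Pbar xC r1 = max_rate2 Pbar (h1 D H beta0 xC) (h2 D H beta0 xC) r1.
  case/andP=> r1_ge0 le_r1; apply: bndE; rewrite ?r1_ge0 ?(ltW P_gt0) //=.
  by rewrite (le_trans le_r1) // r1max_decreasing // ltW.
have r1bI : 0 <= r1b <= r1max D H beta0 Pbar xB by rewrite !ltW.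
exists r1b; rewrite bndB ?bndC // r1b_gt0; split => //; split.
- move=> r1 r1I; rewrite bndB ?bndC // => eq_r1.
  case/andP: r1I => r1_ge0 le_r1; case: (ltrgtP r1 r1b) => // [lt_r1|gt_r1].
  + by have := before r1; rewrite r1_ge0 lt_r1 eq_r1 ltxx => /(_ isT).
  + by have := after r1; rewrite gt_r1 le_r1 eq_r1 ltxx => /(_ isT).
- move=> r1 /andP[r1_ge0 lt_r1].
  have r1I : 0 <= r1 <= r1max D H beta0 Pbar xB.
    by rewrite r1_ge0 ltW // (lt_trans lt_r1).
  by rewrite bndB // bndC // before // r1_ge0.
- move=> r1 /andP[lt_r1 le_r1].
  have r1I : 0 <= r1 <= r1max D H beta0 Pbar xB.
    by rewrite le_r1 andbT ltW // (lt_trans r1b_gt0).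
  by rewrite bndB // bndC // after // lt_r1.
Qed.
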